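(* Let $X$ be a set, let $c:X\times X\to(-\infty,\infty]$ be a symmetric cost function ($c(x,y)=c(y,x)$), let $Y\subseteq X$, and let $\tilde{c}:Y\times Y\to(-\infty,\infty]$ be the restriction of $c$, i.e. $\tilde{c}(x,y)=c(x,y)$ for all $x,y\in Y$. Let $\mathcal{C}_X$ denote the $c$-class (the image of the transform $K\mapsto K^c$ on subsets of $X$) and $\mathcal{C}_Y$ the $\tilde{c}$-class (the image of the transform $K\mapsto K^{\tilde{c}}$ on subsets of $Y$). Assume that $Y\in \mathcal{C}_X$. Then \[ \mathcal{C}_Y=\{ B\cap Y: \, Y^c \subseteq B \in \mathcal{C}_X\}.\]
   Context: For a symmetric cost $c:X\times X\to(-\infty,\infty]$ and $K\subseteq X$, the $c$-dual set is $K^c=\{y\in X:\ c(x,y)\ge 0 \ \forall x\in K\}$; analogously, for $A\subseteq Y$, $A^{\tilde{c}}=\{y\in Y:\ \tilde{c}(x,y)\ge 0\ \forall x\in A\}$. The map $K\mapsto K^c$ is an order reversing quasi involution, and its image $\mathcal{C}_X=\{K^c: K\subseteq X\}$ consists exactly of the sets $K\subseteq X$ with $K^{cc}=K$ (similarly $\mathcal{C}_Y$ consists of the $A\subseteq Y$ with $A^{\tilde{c}\tilde{c}}=A$). Here $Y^c$ denotes the $c$-dual of $Y$ taken in $X$. *)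

From mathcomp Require Import all_boot all_order all_algebra.
From mathcomp Require Import all_classical all_reals ereal.
Set Implicit Arguments. Unset Strict Implicit. Unset Printing Implicit Defensive.
Import Order.TTheory GRing.Theory Num.Theory.
Local Open Scope classical_set_scope.
Local Open Scope ereal_scope.

Definition cdual {R : realType} {X : Type} (c : X -> X -> \bar R) (K : set X)
  : set X := [set y | forall x, K x -> 0 <= c x y].

Definition cclass {R : realType} {X : Type} (c : X -> X -> \bar R) : set (set X) :=
  [set A | exists K : set X, A = cdual c K].

(* Subsets of Y are represented as subsets A of X with A `<=` Y.
   The restricted cost c~ = c on Y x Y; its dual of A `<=` Y, taken in Y:
   A^{c~} = {y in Y : c~(x,y) >= 0 for all x in A}. *)
Definition cdual_restr {R : realType} {X : Type} (c : X -> X -> \bar R)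
  (Y : set X) (A : set X) : set X :=
  [set y | Y y /\ forall x, A x -> 0 <= c x y].

Definition cclass_restr {R : realType} {X : Type} (c : X -> X -> \bar R)
  (Y : set X) : set (set X) :=
  [set A | exists K : set X, K `<=` Y /\ A = cdual_restr c Y K].

(** The c-dual is an antitone Galois connection with itself, so [K^ccc = K^c]
    and [C_X] consists of the [c]-closed sets; the restricted dual is the
    trace [A^c ∩ Y].  A set [K^c̃ = K^c ∩ Y] with [K ⊆ Y] is thus the trace of
    [K^c ⊇ Y^c].  Conversely, if [Y^c ⊆ B = B^cc] then [B^c ⊆ Y^cc = Y], and
    [B ∩ Y = B^cc ∩ Y] is the restricted dual of [B^c]. *)
From mathcomp Require Import all_boot all_order all_algebra.
From mathcomp Require Import all_classical all_reals ereal.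
Set Implicit Arguments. Unset Strict Implicit. Unset Printing Implicit Defensive.
Local Open Scope classical_set_scope.
Local Open Scope ereal_scope.

Section CDual.

Variables (R : realType) (X : Type) (c : X -> X -> \bar R).

Lemma cdualS (K L : set X) : K `<=` L -> cdual c L `<=` cdual c K.
Proof. by move=> KL y Ly x /KL; exact: Ly. Qed.

Lemma cdual_restrE (Y A : set X) : cdual_restr c Y A = cdual c A `&` Y.
Proof. by apply/seteqP; split=> y /= []. Qed.

Hypothesis c_sym : forall x y, c x y = c y x.

Lemma sub_cdual2 (K : set X) : K `<=` cdual c (cdual c K).
Proof. by move=> x Kx y Ky; rewrite c_sym; exact: Ky. Qed.

Lemma cdual3 (K : set X) : cdual c (cdual c (cdual c K)) = cdual c K.
Proof.
apply/seteqP; split; last exact: sub_cdual2.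
exact/cdualS/sub_cdual2.
Qed.

Lemma cclassP (A : set X) : cclass c A <-> cdual c (cdual c A) = A.
Proof. by split=> [[K ->]|<-]; [exact: cdual3 | exists (cdual c A)]. Qed.

End CDual.

Theorem lemma8p15 (R : realType) (X : Type) (c : X -> X -> \bar R) (Y : set X)
  (c_sym : forall x y, c x y = c y x)
  (c_ninfty : forall x y, c x y != -oo)
  (hY : cclass c Y) :
  cclass_restr c Y =
  [set A | exists B : set X, [/\ cclass c B, cdual c Y `<=` B & A = B `&` Y]].
Proof.
have Ycc : cdual c (cdual c Y) = Y by exact/cclassP.
apply/seteqP; split=> A /=.
- move=> [K [KY ->]]; exists (cdual c K); split.
  + by exists K.
  + exact: cdualS.
  + exact: cdual_restrE.
- move=> [B [/(cclassP c_sym) Bcc YcB ->]]; exists (cdual c B); split.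
  + by rewrite -Ycc; exact: cdualS YcB.
  + by rewrite cdual_restrE Bcc.
Qed.
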